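(* For a semiring $(S,+,\cdot)$ the following are equivalent: (i) $S$ is a quasi completely regular semiring and $e+f=f+e$ for all $e,f\in E^+(S)$; (ii) $S$ is a b-lattice of quasi skew-rings and $e+f=f+e$ for all $e,f\in E^+(S)$; (iii) $S$ is additively quasi regular and $Reg^+S$ is a subsemigroup of $(S,+)$ which (as a semiring under the restricted operations) is a b-lattice of skew-rings.
   Context: A semiring $(S,+,\cdot)$ has two associative operations with $a(b+c)=ab+ac$, $(b+c)a=ba+ca$. $na$ is the $n$-fold sum of $a$. $E^+(S)$ is the set of additive idempotents; $Reg^+S$ is the set of additively regular elements ($a=a+x+a$ for some $x\in S$). $S$ is additively quasi regular if for each $a$ some $na$ is additively regular. $a$ is completely regular if there is $x$ with $a=a+x+a$, $a+x=x+a$, $a(a+x)=a+x$; $S$ is quasi completely regular if for each $a$ some $na$ is completely regular. A skew-ring is a semiring whose additive reduct is a (not necessarily commutative) group. A quasi skew-ring is a semiring $T$ containing a subsemiring $R$ which is a skew-ring such that for every $a\in T$ some $na\in R$. A b-lattice is a semiring with $(S,\cdot)$ a band and $(S,+)$ a semilattice; $S$ is a b-lattice of semirings of a class if there is a congruence $\rho$ on $S$ with $S/\rho$ a b-lattice and each $\rho$-class a subsemiring in that class. *)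

Set Implicit Arguments.

Record semiring := Semiring {
  carrier :> Type;
  sadd : carrier -> carrier -> carrier;
  smul : carrier -> carrier -> carrier;
  saddA : forall a b c, sadd a (sadd b c) = sadd (sadd a b) c;
  smulA : forall a b c, smul a (smul b c) = smul (smul a b) c;
  smulDr : forall a b c, smul a (sadd b c) = sadd (smul a b) (smul a c);
  smulDl : forall a b c, smul (sadd b c) a = sadd (smul b a) (smul c a)
}.

Arguments sadd {s}.
Arguments smul {s}.

Section Defs.
Variable SR : semiring.
Local Notation "a + b" := (sadd a b).
Local Notation "a * b" := (smul a b).

(* nsum n a = n * a, the n-fold sum of a, for n >= 1 (nsum 0 a := a is junk;
   we always quantify over n >= 1). *)
Fixpoint nsum (n : nat) (a : SR) : SR :=
  match n with
  | 0 => a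
  | S m => match m with 0 => a | S _ => sadd (nsum m a) a end
  end.

Definition add_idem (e : SR) : Prop := e + e = e.

Definition add_regular (a : SR) : Prop := exists x : SR, a = a + x + a.

Definition add_quasi_regular : Prop :=
  forall a : SR, exists n, 1 <= n /\ add_regular (nsum n a).

Definition completely_regular (a : SR) : Prop :=
  exists x : SR, a = a + x + a /\ a + x = x + a /\ a * (a + x) = a + x.

Definition quasi_completely_regular : Prop :=
  forall a : SR, exists n, 1 <= n /\ completely_regular (nsum n a).

Definition E_plus_commute : Prop :=
  forall e f : SR, add_idem e -> add_idem f -> e + f = f + e.

Definition add_closed (P : SR -> Prop) : Prop :=
  forall x y, P x -> P y -> P (x + y).
Definition mul_closed (P : SR -> Prop) : Prop :=
  forall x y, P x -> P y -> P (x * y).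
Definition subsemiring (P : SR -> Prop) : Prop := add_closed P /\ mul_closed P.

Definition skew_ring (P : SR -> Prop) : Prop :=
  exists z : SR, P z /\ (forall x, P x -> z + x = x /\ x + z = x) /\
    (forall x, P x -> exists y, P y /\ x + y = z /\ y + x = z).

Definition quasi_skew_ring (T : SR -> Prop) : Prop :=
  exists R : SR -> Prop, (forall x, R x -> T x) /\ subsemiring R /\ skew_ring R /\
    (forall a, T a -> exists n, 1 <= n /\ R (nsum n a)).

Definition congruence_on (P : SR -> Prop) (rho : SR -> SR -> Prop) : Prop :=
  (forall x y, rho x y -> P x /\ P y) /\
  (forall x, P x -> rho x x) /\
  (forall x y, rho x y -> rho y x) /\
  (forall x y z, rho x y -> rho y z -> rho x z) /\
  (forall x y u v, rho x y -> rho u v -> rho (x + u) (y + v) /\ rho (x * u) (y * v)).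

(* P/rho is a b-lattice: (P/rho, * ) is a band, (P/rho, +) a semilattice. *)
Definition quotient_b_lattice (P : SR -> Prop) (rho : SR -> SR -> Prop) : Prop :=
  forall x y, P x -> P y ->
    rho (x * x) x /\ rho (x + x) x /\ rho (x + y) (y + x).

Definition b_lattice_of (C : (SR -> Prop) -> Prop) (P : SR -> Prop) : Prop :=
  exists rho : SR -> SR -> Prop, congruence_on P rho /\ quotient_b_lattice P rho /\
    (forall x, P x -> subsemiring (rho x) /\ C (rho x)).

End Defs.

Definition Whole (S : semiring) : S -> Prop := fun _ => True.

From Stdlib Require Import Lia.

(* Under (i) every additive idempotent is multiplicatively idempotent, and since
   additive idempotents commute, mutually inverse elements commute as well; hence
   (Reg^+ S, +) is a union of the groups H_e, whose identities e commute with all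
   of Reg^+ S, and H_e + H_f <= H_(e+f), H_e H_f <= H_(ef).  Lying in the same H_e
   is then the congruence of (iii).  Given (iii), all regular multiples of a lie in
   one rho-class, and identifying a and b when these classes agree is a congruence
   on S with quasi skew-ring classes, i.e. (ii); E^+(S) commutes because e + f and
   f + e lie in a common skew-ring.  Given (ii), some na lies in a skew-ring R with
   zero z, and na z = z because it is an additive idempotent of R; this is (i). *)

Set Implicit Arguments.
Unset Strict Implicit.

Section Semiring.
Variable SR : semiring.
Local Infix "⊕" := (@sadd SR) (at level 50, left associativity).
Local Infix "⊗" := (@smul SR) (at level 40, left associativity).
Local Notation Reg := (add_regular SR).

Lemma sadd_rewrite_under {p q r : SR} (H : p ⊕ q = r) (w : SR) : p ⊕ (q ⊕ w) = r ⊕ w.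
Proof. rewrite saddA, H. reflexivity. Qed.

Lemma sadd_rewrite_under2 {p q s r : SR} (H : p ⊕ (q ⊕ s) = r) (w : SR) :
  p ⊕ (q ⊕ (s ⊕ w)) = r ⊕ w.
Proof. rewrite <- H, !saddA. reflexivity. Qed.

(* Rewriting modulo associativity of [⊕]: sums are kept right-nested, and an
   equation whose left side is a sum of at most three terms is applied to every
   right-nested subsum starting with these terms. *)
Ltac rassoc := repeat rewrite <- saddA.
Ltac arewrite H :=
  rassoc;
  repeat (first [ rewrite H | rewrite (sadd_rewrite_under H)
                | rewrite (sadd_rewrite_under2 H) ]; rassoc).

Lemma add_idem_mul_l (a e : SR) : add_idem SR e -> add_idem SR (a ⊗ e).
Proof. intro He. unfold add_idem. rewrite <- smulDr, He. reflexivity. Qed.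

Lemma add_idem_mul_r (e a : SR) : add_idem SR e -> add_idem SR (e ⊗ a).
Proof. intro He. unfold add_idem. rewrite <- smulDl, He. reflexivity. Qed.

Lemma add_idem_regular (e : SR) : add_idem SR e -> Reg e.
Proof. intro He. exists e. rewrite !He. reflexivity. Qed.

Lemma add_regular_mul_r (a b : SR) : Reg a -> Reg (a ⊗ b).
Proof. intros [x Hx]. exists (x ⊗ b). rewrite <- !smulDl, <- Hx. reflexivity. Qed.

Lemma add_regular_mul_l (a b : SR) : Reg b -> Reg (a ⊗ b).
Proof. intros [x Hx]. exists (a ⊗ x). rewrite <- !smulDr, <- Hx. reflexivity. Qed.

Lemma add_regular_inverse (a : SR) :
  Reg a -> exists b, a ⊕ b ⊕ a = a /\ b ⊕ a ⊕ b = b.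
Proof.
  intros [x Hx]. exists (x ⊕ a ⊕ x).
  assert (Ha : a ⊕ (x ⊕ a) = a) by (rewrite saddA; symmetry; exact Hx).
  split; arewrite Ha; reflexivity.
Qed.

Lemma nsum_idem (n : nat) (e : SR) : add_idem SR e -> nsum SR n e = e.
Proof.
  intro He. induction n as [|[|n] IH]; [reflexivity | reflexivity |].
  change (nsum SR (S (S n)) e) with (nsum SR (S n) e ⊕ e). rewrite IH. exact He.
Qed.

(* [skew_ring P] unfolds to [exists z, add_group_zero P z]. *)
Definition add_group_zero (P : SR -> Prop) (z : SR) : Prop :=
  P z /\ (forall x, P x -> z ⊕ x = x /\ x ⊕ z = x) /\
  (forall x, P x -> exists y, P y /\ x ⊕ y = z /\ y ⊕ x = z).

Section AddGroup.
Variables (P : SR -> Prop) (z : SR).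
Hypothesis Pz : add_group_zero P z.

Lemma add_group_idem_zero (p : SR) : P p -> add_idem SR p -> p = z.
Proof.
  intros Pp Hp. destruct Pz as [_ [Hid Hinv]].
  destruct (Hinv p Pp) as [q [_ [Hpq _]]].
  rewrite <- (proj2 (Hid p Pp)), <- Hpq, saddA, Hp. reflexivity.
Qed.

Lemma add_group_absorb_l (e c d : SR) : P c -> P d -> e ⊕ c = c -> e ⊕ d = d.
Proof.
  intros Pc Pd Hc. destruct Pz as [_ [Hid Hinv]].
  destruct (Hinv c Pc) as [c' [_ [Hcc' _]]].
  rewrite <- (proj1 (Hid d Pd)), <- Hcc', !saddA, Hc. reflexivity.
Qed.

Lemma add_group_absorb_r (e c d : SR) : P c -> P d -> c ⊕ e = c -> d ⊕ e = d.
Proof.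
  intros Pc Pd Hc. destruct Pz as [_ [Hid Hinv]].
  destruct (Hinv c Pc) as [c' [_ [_ Hc'c]]].
  rewrite <- (proj2 (Hid d Pd)), <- Hc'c, <- !saddA, Hc. reflexivity.
Qed.
End AddGroup.

(* [x] lies in the maximal subgroup [H_e] of [(S, ⊕)]. *)
Record in_group (e x : SR) : Prop := InGroup {
  in_group_idl : e ⊕ x = x;
  in_group_idr : x ⊕ e = x;
  in_group_opp : exists y, e ⊕ y = y /\ y ⊕ e = y /\ x ⊕ y = e /\ y ⊕ x = e
}.

Lemma in_group_idem (e x : SR) : in_group e x -> add_idem SR e.
Proof.
  intros [Hex _ [y [_ [_ [Hxy _]]]]]. unfold add_idem.
  rewrite <- Hxy at 2. rewrite saddA, Hex. exact Hxy.
Qed.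

Lemma in_group_self (e : SR) : add_idem SR e -> in_group e e.
Proof. intro He. split; try exact He. exists e. repeat split; exact He. Qed.

Lemma in_group_oppE (e x : SR) :
  in_group e x -> exists y, in_group e y /\ x ⊕ y = e /\ y ⊕ x = e.
Proof.
  intros [Hex Hxe [y [Hey [Hye [Hxy Hyx]]]]].
  exists y. repeat split; try assumption. exists x. repeat split; assumption.
Qed.

Lemma in_group_regular (e x : SR) : in_group e x -> Reg x.
Proof. intros [Hex _ [y [_ [_ [Hxy _]]]]]. exists y. rewrite Hxy, Hex. reflexivity. Qed.

Lemma in_group_unique (e f x : SR) : in_group e x -> in_group f x -> e = f.
Proof.
  intros [Hex _ [y [_ [_ [_ Hyx]]]]] [_ Hxf [y' [_ [_ [Hxy' _]]]]].
  transitivity (e ⊕ f).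
  - rewrite <- Hyx, <- saddA, Hxf. reflexivity.
  - rewrite <- Hxy', saddA, Hex. reflexivity.
Qed.

Lemma in_group_mul_l (a f u : SR) : in_group f u -> in_group (a ⊗ f) (a ⊗ u).
Proof.
  intros [Hfu Huf [y [Hfy [Hyf [Huy Hyu]]]]].
  split; [| | exists (a ⊗ y)]; rewrite <- ?smulDr;
    rewrite ?Hfu, ?Huf, ?Hfy, ?Hyf, ?Huy, ?Hyu; repeat split.
Qed.

Lemma in_group_mul_r (e x a : SR) : in_group e x -> in_group (e ⊗ a) (x ⊗ a).
Proof.
  intros [Hex Hxe [y [Hey [Hye [Hxy Hyx]]]]].
  split; [| | exists (y ⊗ a)]; rewrite <- ?smulDl;
    rewrite ?Hex, ?Hxe, ?Hey, ?Hye, ?Hxy, ?Hyx; repeat split.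
Qed.

(* [e ⊗ u] lies in the group of [e ⊗ f] and in that of the idempotent [e ⊗ u]. *)
Lemma in_group_mul (e f x u : SR) : in_group e x -> in_group f u -> in_group (e ⊗ f) (x ⊗ u).
Proof.
  intros Hx Hu.
  assert (Heu : in_group (e ⊗ u) (e ⊗ u))
    by (apply in_group_self, add_idem_mul_r, (in_group_idem Hx)).
  rewrite (in_group_unique (in_group_mul_l e Hu) Heu).
  exact (in_group_mul_r u Hx).
Qed.

Section CommutingIdempotents.
Hypothesis idem_comm : E_plus_commute SR.
Hypothesis idem_mul_idem : forall e : SR, add_idem SR e -> e ⊗ e = e.

Lemma add_inverse_comm (a b : SR) : a ⊕ b ⊕ a = a -> b ⊕ a ⊕ b = b -> a ⊕ b = b ⊕ a.
Proof.
  intros Hab Hba.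
  assert (He : add_idem SR (a ⊕ b)) by (unfold add_idem; rewrite saddA, Hab; reflexivity).
  assert (Hf : add_idem SR (b ⊕ a)) by (unfold add_idem; rewrite saddA, Hba; reflexivity).
  assert (Hef : (a ⊕ b) ⊗ (b ⊕ a) = b ⊕ a).
  { rewrite smulDl, (idem_comm (add_idem_mul_l a Hf) (add_idem_mul_l b Hf)), <- smulDl.
    exact (idem_mul_idem Hf). }
  rewrite <- (idem_mul_idem He), <- Hef at 1. rewrite !smulDr.
  apply idem_comm; apply add_idem_mul_r; exact He.
Qed.

Lemma add_regular_in_group (a : SR) : Reg a -> exists e, in_group e a.
Proof.
  intro Ha. destruct (add_regular_inverse Ha) as [b [Hab Hba]].
  pose proof (add_inverse_comm Hab Hba) as Cab.
  exists (a ⊕ b). split.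
  - exact Hab.
  - rewrite Cab, saddA, Hab. reflexivity.
  - exists b. repeat split.
    + rewrite Cab. exact Hba.
    + rewrite saddA. exact Hba.
    + symmetry. exact Cab.
Qed.

(* [x ⊕ e] and [e ⊕ y] are mutually inverse, hence commute. *)
Lemma add_idem_comm_in_group (e f x : SR) : add_idem SR e -> in_group f x -> e ⊕ x = x ⊕ e.
Proof.
  intros He Hx. pose proof (in_group_idem Hx) as Hf.
  destruct Hx as [Hfx Hxf [y [Hfy [_ [_ Hyx]]]]].
  unfold add_idem in He, Hf. pose proof (idem_comm He Hf) as Cef.
  assert (Hcomm : x ⊕ e ⊕ (e ⊕ y) = e ⊕ y ⊕ (x ⊕ e)).
  { apply add_inverse_comm.
    - arewrite He. arewrite Hyx. rewrite <- Cef. arewrite He. rewrite Cef.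
      arewrite Hxf. reflexivity.
    - arewrite He. arewrite Hyx. rewrite (sadd_rewrite_under (eq_sym Cef)).
      arewrite He. arewrite Hfy. reflexivity. }
  assert (Hxey : x ⊕ (e ⊕ y) = e ⊕ f).
  { revert Hcomm. arewrite He. arewrite Hyx. rewrite <- Cef. arewrite He. auto. }
  rewrite <- Hfx at 1. rewrite saddA, <- Hxey.
  arewrite Hyx. rewrite Cef. arewrite Hxf. reflexivity.
Qed.

Lemma in_group_add (e f x u : SR) : in_group e x -> in_group f u -> in_group (e ⊕ f) (x ⊕ u).
Proof.
  intros Hx Hu.
  pose proof (in_group_idem Hx) as He. pose proof (in_group_idem Hu) as Hf.
  destruct (in_group_oppE Hx) as [x' [Hx' [Hxx' Hx'x]]].
  destruct (in_group_oppE Hu) as [u' [Hu' [Huu' Hu'u]]].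
  pose proof (add_idem_comm_in_group He Hu) as Ceu.
  pose proof (add_idem_comm_in_group He Hu') as Ceu'.
  pose proof (add_idem_comm_in_group Hf Hx) as Cfx.
  pose proof (add_idem_comm_in_group Hf Hx') as Cfx'.
  destruct Hx as [Hex Hxe _], Hu as [Hfu Huf _].
  destruct Hx' as [Hex' Hx'e _], Hu' as [Hfu' Hu'f _].
  split.
  - arewrite Cfx. arewrite Hex. arewrite Hfu. reflexivity.
  - arewrite (eq_sym Ceu). arewrite Hxe. arewrite Huf. reflexivity.
  - exists (u' ⊕ x'). repeat split.
    + arewrite Hfu'. arewrite Ceu'. arewrite Hex'. reflexivity.
    + arewrite Hx'e. arewrite (eq_sym Cfx'). arewrite Hu'f. reflexivity.
    + arewrite Huu'. arewrite Cfx'. arewrite Hxx'. reflexivity.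
    + arewrite Hx'x. arewrite (eq_sym Ceu'). arewrite Hu'u. reflexivity.
Qed.

Lemma add_regular_add_closed : add_closed SR Reg.
Proof.
  intros x y Hx Hy.
  destruct (add_regular_in_group Hx) as [e He], (add_regular_in_group Hy) as [f Hf].
  exact (in_group_regular (in_group_add He Hf)).
Qed.

Definition same_group (x y : SR) : Prop := exists e, in_group e x /\ in_group e y.

Lemma same_groupE (e x y : SR) : in_group e x -> same_group x y <-> in_group e y.
Proof.
  intro Hx. split.
  - intros [e' [Hx' Hy]]. rewrite (in_group_unique Hx Hx'). exact Hy.
  - intro Hy. exists e. split; assumption.
Qed.

Lemma same_group_congruence : congruence_on SR Reg same_group.
Proof.
  split; [| split; [| split; [| split]]].
  - intros x y [e [Hx Hy]]. split; eapply in_group_regular; eassumption.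
  - intros x Hx. destruct (add_regular_in_group Hx) as [e He]. exists e. split; assumption.
  - intros x y [e [Hx Hy]]. exists e. split; assumption.
  - intros x y z [e [Hx Hy]] Hyz. exists e. split; [exact Hx |].
    exact (proj1 (same_groupE _ Hy) Hyz).
  - intros x y u v [e [Hx Hy]] [f [Hu Hv]]. split.
    + exists (e ⊕ f). split; apply in_group_add; assumption.
    + exists (e ⊗ f). split; apply in_group_mul; assumption.
Qed.

Lemma same_group_b_lattice : quotient_b_lattice SR Reg same_group.
Proof.
  intros x y Hx Hy.
  destruct (add_regular_in_group Hx) as [e He], (add_regular_in_group Hy) as [f Hf].
  pose proof (in_group_idem He) as Ee.
  split; [| split].
  - exists e. split; [| exact He].
    rewrite <- (idem_mul_idem Ee) at 1. exact (in_group_mul He He).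
  - exists e. split; [| exact He].
    rewrite <- Ee at 1. exact (in_group_add He He).
  - exists (e ⊕ f). split; [exact (in_group_add He Hf) |].
    rewrite (idem_comm Ee (in_group_idem Hf)). exact (in_group_add Hf He).
Qed.

Lemma same_group_class (x : SR) :
  Reg x -> subsemiring SR (same_group x) /\ skew_ring SR (same_group x).
Proof.
  intro Hx. destruct (add_regular_in_group Hx) as [e He].
  pose proof (in_group_idem He) as Ee.
  split; [split |].
  - intros y z Hy Hz. apply (same_groupE _ He).
    rewrite <- Ee. apply in_group_add; apply (same_groupE _ He); assumption.
  - intros y z Hy Hz. apply (same_groupE _ He).
    rewrite <- (idem_mul_idem Ee). apply in_group_mul; apply (same_groupE _ He); assumption.
  - exists e. split; [| split].
    + apply (same_groupE _ He), in_group_self, Ee.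
    + intros y Hy. apply (same_groupE _ He) in Hy. split; apply Hy.
    + intros y Hy. apply (same_groupE _ He) in Hy.
      destruct (in_group_oppE Hy) as [y' [Hy' Hyy']].
      exists y'. split; [apply (same_groupE _ He), Hy' | exact Hyy'].
Qed.
End CommutingIdempotents.

Lemma quasi_completely_regular_mul_idem :
  quasi_completely_regular SR -> forall e : SR, add_idem SR e -> e ⊗ e = e.
Proof.
  intros Hq e He. destruct (Hq e) as [n [_ [x [Hexe [Hxc Hmul]]]]].
  rewrite (nsum_idem n He) in Hexe, Hxc, Hmul.
  assert (Hex : e ⊕ x = e).
  { rewrite Hxc, <- He at 1. rewrite saddA, <- Hxc. symmetry. exact Hexe. }
  rewrite Hex in Hmul. exact Hmul.
Qed.

Lemma quasi_completely_regular_b_lattice_regular :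
  quasi_completely_regular SR -> E_plus_commute SR ->
  add_quasi_regular SR /\ add_closed SR Reg /\ mul_closed SR Reg /\
  b_lattice_of SR (skew_ring SR) Reg.
Proof.
  intros Hq Hcomm. pose proof (quasi_completely_regular_mul_idem Hq) as Hmul.
  split; [| split; [| split]].
  - intro a. destruct (Hq a) as [n [Hn [x [Hx _]]]]. exists n. split; [exact Hn | exists x; exact Hx].
  - exact (add_regular_add_closed Hcomm Hmul).
  - intros x y _ Hy. exact (add_regular_mul_l x Hy).
  - exists same_group. split; [| split].
    + exact (same_group_congruence Hcomm Hmul).
    + exact (same_group_b_lattice Hcomm Hmul).
    + exact (same_group_class Hcomm Hmul).
Qed.

Lemma add_group_completely_regular (P : SR -> Prop) (z a : SR) :
  mul_closed SR P -> add_group_zero P z -> P a -> completely_regular SR a.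
Proof.
  intros Pmul Pz Pa. pose proof Pz as [Pz0 [Hid Hinv]].
  destruct (Hinv a Pa) as [y [_ [Hay Hya]]].
  exists y. rewrite Hay. split; [| split].
  - symmetry. apply Hid, Pa.
  - symmetry. exact Hya.
  - apply (add_group_idem_zero Pz); [apply Pmul; assumption |].
    apply add_idem_mul_l. apply Hid, Pz0.
Qed.

Lemma quasi_skew_ring_quasi_completely_regular (T : SR -> Prop) (a : SR) :
  quasi_skew_ring SR T -> T a -> exists n, 1 <= n /\ completely_regular SR (nsum SR n a).
Proof.
  intros [R [_ [[_ Rmul] [[z Rz] Hmult]]]] Ta.
  destruct (Hmult a Ta) as [n [Hn Ra]].
  exists n. split; [exact Hn |]. exact (add_group_completely_regular Rmul Rz Ra).
Qed.

Lemma b_lattice_quasi_skew_quasi_completely_regular :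
  b_lattice_of SR (quasi_skew_ring SR) (Whole SR) -> quasi_completely_regular SR.
Proof.
  intros [rho [[_ [rho_refl _]] [_ Hclass]]] a.
  exact (quasi_skew_ring_quasi_completely_regular (proj2 (Hclass a I)) (rho_refl a I)).
Qed.

(* [nsumS k a] is the [(k+1)]-fold sum, free of the junk value [nsum 0 a]. *)
Fixpoint nsumS (k : nat) (a : SR) : SR :=
  match k with 0 => a | S k' => nsumS k' a ⊕ a end.

Lemma nsum_nsumS (k : nat) (a : SR) : nsum SR (S k) a = nsumS k a.
Proof.
  induction k as [|k IH]; [reflexivity |].
  change (nsum SR (S (S k)) a) with (nsum SR (S k) a ⊕ a). rewrite IH. reflexivity.
Qed.

Lemma nsumS_add (k m : nat) (a : SR) : nsumS (k + S m) a = nsumS k a ⊕ nsumS m a.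
Proof.
  induction m as [|m IH].
  - replace (k + 1) with (S k) by lia. reflexivity.
  - rewrite <- plus_n_Sm. simpl. rewrite IH, saddA. reflexivity.
Qed.

Lemma nsumS_nsumS (k m : nat) (a : SR) : nsumS k (nsumS m a) = nsumS (k * S m + m) a.
Proof.
  induction k as [|k IH]; [reflexivity |].
  simpl nsumS at 1. rewrite IH, <- nsumS_add. f_equal. lia.
Qed.

Lemma nsumS_comm (k m : nat) (a : SR) : nsumS k (nsumS m a) = nsumS m (nsumS k a).
Proof. rewrite !nsumS_nsumS. f_equal. lia. Qed.

Lemma nsumS_mul_r (k : nat) (a b : SR) : nsumS k a ⊗ b = nsumS k (a ⊗ b).
Proof. induction k as [|k IH]; [reflexivity |]. simpl. rewrite smulDl, IH. reflexivity. Qed.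

Lemma nsumS_mul_l (k : nat) (a b : SR) : a ⊗ nsumS k b = nsumS k (a ⊗ b).
Proof. induction k as [|k IH]; [reflexivity |]. simpl. rewrite smulDr, IH. reflexivity. Qed.

Lemma add_quasi_regular_nsumS (a : SR) : add_quasi_regular SR -> exists k, Reg (nsumS k a).
Proof.
  intro Hq. destruct (Hq a) as [[|n] [Hn Ha]]; [lia |].
  exists n. rewrite <- nsum_nsumS. exact Ha.
Qed.

Section RegularBLattice.
Variable rho : SR -> SR -> Prop.
Hypothesis rho_congr : congruence_on SR Reg rho.
Hypothesis rho_b_lattice : quotient_b_lattice SR Reg rho.
Hypothesis rho_class : forall x, Reg x -> subsemiring SR (rho x) /\ skew_ring SR (rho x).
Hypothesis regular_add : add_closed SR Reg.
Hypothesis quasi_reg : add_quasi_regular SR.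

Lemma rho_regular (x y : SR) : rho x y -> Reg x /\ Reg y.
Proof. apply rho_congr. Qed.

Lemma rho_refl (x : SR) : Reg x -> rho x x.
Proof. apply rho_congr. Qed.

Lemma rho_sym (x y : SR) : rho x y -> rho y x.
Proof. apply rho_congr. Qed.

Lemma rho_trans (x y z : SR) : rho x y -> rho y z -> rho x z.
Proof. apply rho_congr. Qed.

Lemma rho_add (x y u v : SR) : rho x y -> rho u v -> rho (x ⊕ u) (y ⊕ v).
Proof. intros Hxy Huv. apply rho_congr; assumption. Qed.

Lemma rho_mul (x y u v : SR) : rho x y -> rho u v -> rho (x ⊗ u) (y ⊗ v).
Proof. intros Hxy Huv. apply rho_congr; assumption. Qed.

Lemma rho_mulxx (x : SR) : Reg x -> rho (x ⊗ x) x.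
Proof. intro Hx. apply (rho_b_lattice Hx Hx). Qed.

Lemma rho_addxx (x : SR) : Reg x -> rho (x ⊕ x) x.
Proof. intro Hx. apply (rho_b_lattice Hx Hx). Qed.

Lemma rho_addC (x y : SR) : Reg x -> Reg y -> rho (x ⊕ y) (y ⊕ x).
Proof. intros Hx Hy. apply (rho_b_lattice Hx Hy). Qed.

(* [e ⊕ f] and [f ⊕ e] lie in one skew-ring class, whose addition is cancellative. *)
Lemma regular_b_lattice_E_plus_commute : E_plus_commute SR.
Proof.
  intros e f He Hf. unfold add_idem in He, Hf.
  assert (Ref : Reg (e ⊕ f))
    by (apply regular_add; apply add_idem_regular; assumption).
  assert (Rfe : Reg (f ⊕ e))
    by (apply regular_add; apply add_idem_regular; assumption).
  destruct (proj2 (rho_class Ref)) as [z Hz].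
  pose proof (rho_refl Ref) as Pef.
  pose proof (rho_addC (add_idem_regular He) (add_idem_regular Hf)) as Pfe.
  assert (Habs_l : e ⊕ (f ⊕ e) = f ⊕ e).
  { apply (add_group_absorb_l Hz Pef Pfe). rewrite saddA, He. reflexivity. }
  assert (Habs_r : e ⊕ f ⊕ e = e ⊕ f).
  { apply (add_group_absorb_r Hz Pfe Pef). rewrite <- saddA, He. reflexivity. }
  rewrite <- Habs_r, <- saddA. exact Habs_l.
Qed.

Lemma rho_nsumS (k : nat) (x : SR) : Reg x -> rho (nsumS k x) x.
Proof.
  intro Hx. induction k as [|k IH]; [exact (rho_refl Hx) |].
  apply (rho_trans (y := x ⊕ x)).
  - exact (rho_add IH (rho_refl Hx)).
  - exact (rho_addxx Hx).
Qed.

Lemma rho_nsumS_nsumS (k m : nat) (a : SR) :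
  Reg (nsumS k a) -> Reg (nsumS m a) -> rho (nsumS k a) (nsumS m a).
Proof.
  intros Hk Hm. pose proof (rho_nsumS m Hk) as Hmk. pose proof (rho_nsumS k Hm) as Hkm.
  rewrite nsumS_comm in Hmk. exact (rho_trans (rho_sym Hmk) Hkm).
Qed.

(* [b] lies in the ρ-class of the regular multiples of [a], which form a single
   ρ-class by [rho_nsumS_nsumS]. *)
Definition regular_rep (a b : SR) : Prop := exists k, Reg (nsumS k a) /\ rho (nsumS k a) b.

Lemma regular_rep_rho (a b c : SR) : regular_rep a b -> regular_rep a c -> rho b c.
Proof.
  intros [k [Hk Hb]] [m [Hm Hc]].
  exact (rho_trans (rho_sym Hb) (rho_trans (rho_nsumS_nsumS Hk Hm) Hc)).
Qed.

Lemma regular_rep_self (x : SR) : Reg x -> regular_rep x x.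
Proof. intro Hx. exists 0. split; [exact Hx | exact (rho_refl Hx)]. Qed.

Lemma regular_rep_rho_r (a b c : SR) : regular_rep a b -> rho b c -> regular_rep a c.
Proof. intros [k [Hk Hb]] Hbc. exists k. split; [exact Hk | exact (rho_trans Hb Hbc)]. Qed.

Lemma regular_rep_regular (a b : SR) : regular_rep a b -> Reg b.
Proof. intros [k [_ Hb]]. exact (proj2 (rho_regular Hb)). Qed.

Lemma regular_rep_rho_self (x b : SR) : Reg x -> regular_rep x b -> rho x b.
Proof. intro Hx. apply regular_rep_rho, regular_rep_self, Hx. Qed.

Lemma regular_rep_exists (a : SR) : exists b, regular_rep a b.
Proof.
  destruct (add_quasi_regular_nsumS a quasi_reg) as [k Hk].
  exists (nsumS k a), k. split; [exact Hk | exact (rho_refl Hk)].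
Qed.

Lemma regular_rep_mul (a b c d : SR) :
  regular_rep a b -> regular_rep c d -> regular_rep (a ⊗ c) (b ⊗ d).
Proof.
  intros [k [Hk Hb]] [m [Hm Hd]]. exists (k * S m + m).
  rewrite <- nsumS_nsumS, <- nsumS_mul_l, <- nsumS_mul_r.
  split; [exact (add_regular_mul_r _ Hk) | exact (rho_mul Hb Hd)].
Qed.

Lemma rho_mul_regular_rep_l (u a b : SR) : Reg u -> regular_rep a b -> rho (u ⊗ a) (u ⊗ b).
Proof.
  intros Hu Hab. apply (regular_rep_rho_self (add_regular_mul_r a Hu)).
  exact (regular_rep_mul (regular_rep_self Hu) Hab).
Qed.

Lemma rho_mul_regular_rep_r (u a b : SR) : Reg u -> regular_rep a b -> rho (a ⊗ u) (b ⊗ u).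
Proof.
  intros Hu Hab. apply (regular_rep_rho_self (add_regular_mul_l a Hu)).
  exact (regular_rep_mul Hab (regular_rep_self Hu)).
Qed.

Lemma rho_mul_add_regular_rep_l (u a b c d : SR) : Reg u ->
  regular_rep a b -> regular_rep c d -> rho (u ⊗ (a ⊕ c)) (u ⊗ b ⊕ u ⊗ d).
Proof.
  intros Hu Hab Hcd. rewrite smulDr.
  exact (rho_add (rho_mul_regular_rep_l Hu Hab) (rho_mul_regular_rep_l Hu Hcd)).
Qed.

Lemma rho_mul_add_regular_rep_r (u a b c d : SR) : Reg u ->
  regular_rep a b -> regular_rep c d -> rho ((a ⊕ c) ⊗ u) (b ⊗ u ⊕ d ⊗ u).
Proof.
  intros Hu Hab Hcd. rewrite smulDl.
  exact (rho_add (rho_mul_regular_rep_r Hu Hab) (rho_mul_regular_rep_r Hu Hcd)).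
Qed.

(* With [t] a representative of [a ⊕ c]:
   [t ~ t t ~ (a ⊕ c) t ~ b t ⊕ d t ~ b (a ⊕ c) ⊕ d (a ⊕ c) ~ (b ⊕ d) (b ⊕ d) ~ b ⊕ d]. *)
Lemma regular_rep_add (a b c d : SR) :
  regular_rep a b -> regular_rep c d -> regular_rep (a ⊕ c) (b ⊕ d).
Proof.
  intros Hab Hcd.
  pose proof (regular_rep_regular Hab) as Rb. pose proof (regular_rep_regular Hcd) as Rd.
  destruct (regular_rep_exists (a ⊕ c)) as [t Ht].
  pose proof (regular_rep_regular Ht) as Rt.
  apply (regular_rep_rho_r Ht).
  assert (Hbt : rho (b ⊗ t) (b ⊗ b ⊕ b ⊗ d))
    by exact (rho_trans (rho_sym (rho_mul_regular_rep_l Rb Ht))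
                        (rho_mul_add_regular_rep_l Rb Hab Hcd)).
  assert (Hdt : rho (d ⊗ t) (d ⊗ b ⊕ d ⊗ d))
    by exact (rho_trans (rho_sym (rho_mul_regular_rep_l Rd Ht))
                        (rho_mul_add_regular_rep_l Rd Hab Hcd)).
  assert (Ht2 : rho t (b ⊗ t ⊕ d ⊗ t))
    by exact (rho_trans (rho_sym (rho_mulxx Rt))
               (rho_trans (rho_sym (rho_mul_regular_rep_r Rt Ht))
                          (rho_mul_add_regular_rep_r Rt Hab Hcd))).
  apply (rho_trans (rho_trans Ht2 (rho_add Hbt Hdt))).
  replace (b ⊗ b ⊕ b ⊗ d ⊕ (d ⊗ b ⊕ d ⊗ d)) with ((b ⊕ d) ⊗ (b ⊕ d))
    by (rewrite smulDl, !smulDr; reflexivity).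
  exact (rho_mulxx (regular_add Rb Rd)).
Qed.

Definition same_regular_rep (a b : SR) : Prop := exists c, regular_rep a c /\ regular_rep b c.

Lemma same_regular_repE (x c y : SR) :
  regular_rep x c -> same_regular_rep x y <-> regular_rep y c.
Proof.
  intro Hx. split.
  - intros [c' [Hx' Hy]]. exact (regular_rep_rho_r Hy (regular_rep_rho Hx' Hx)).
  - intro Hy. exists c. split; assumption.
Qed.

Lemma same_regular_rep_congruence : congruence_on SR (Whole SR) same_regular_rep.
Proof.
  split; [| split; [| split; [| split]]].
  - intros x y _. split; exact I.
  - intros x _. destruct (regular_rep_exists x) as [c Hc]. exists c. split; assumption.
  - intros x y [c [Hx Hy]]. exists c. split; assumption.
  - intros x y z [c [Hx Hy]] Hyz. exists c. split; [exact Hx |].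
    exact (proj1 (same_regular_repE _ Hy) Hyz).
  - intros x y u v [c [Hx Hy]] [d [Hu Hv]]. split.
    + exists (c ⊕ d). split; apply regular_rep_add; assumption.
    + exists (c ⊗ d). split; apply regular_rep_mul; assumption.
Qed.

Lemma same_regular_rep_b_lattice : quotient_b_lattice SR (Whole SR) same_regular_rep.
Proof.
  intros x y _ _.
  destruct (regular_rep_exists x) as [c Hc], (regular_rep_exists y) as [d Hd].
  pose proof (regular_rep_regular Hc) as Rc. pose proof (regular_rep_regular Hd) as Rd.
  split; [| split].
  - exists c. split; [| exact Hc].
    exact (regular_rep_rho_r (regular_rep_mul Hc Hc) (rho_mulxx Rc)).
  - exists c. split; [| exact Hc].
    exact (regular_rep_rho_r (regular_rep_add Hc Hc) (rho_addxx Rc)).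
  - exists (c ⊕ d). split; [exact (regular_rep_add Hc Hd) |].
    exact (regular_rep_rho_r (regular_rep_add Hd Hc) (rho_addC Rd Rc)).
Qed.

(* The skew-ring of the class of [x] is the ρ-class of its representatives. *)
Lemma same_regular_rep_class (x : SR) :
  subsemiring SR (same_regular_rep x) /\ quasi_skew_ring SR (same_regular_rep x).
Proof.
  destruct (regular_rep_exists x) as [c Hc]. pose proof (regular_rep_regular Hc) as Rc.
  split; [split |].
  - intros y z Hy Hz. apply (same_regular_repE _ Hc).
    apply (regular_rep_rho_r (b := c ⊕ c)); [| exact (rho_addxx Rc)].
    apply regular_rep_add; apply (same_regular_repE _ Hc); assumption.
  - intros y z Hy Hz. apply (same_regular_repE _ Hc).
    apply (regular_rep_rho_r (b := c ⊗ c)); [| exact (rho_mulxx Rc)].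
    apply regular_rep_mul; apply (same_regular_repE _ Hc); assumption.
  - exists (rho c). split; [| split; [| split]].
    + intros w Hw. apply (same_regular_repE _ Hc).
      exact (regular_rep_rho_r (regular_rep_self (proj2 (rho_regular Hw))) (rho_sym Hw)).
    + exact (proj1 (rho_class Rc)).
    + exact (proj2 (rho_class Rc)).
    + intros y Hy. apply (same_regular_repE _ Hc) in Hy. destruct Hy as [k [Hk Hkc]].
      exists (S k). split; [lia |]. rewrite nsum_nsumS. exact (rho_sym Hkc).
Qed.
End RegularBLattice.

Lemma regular_b_lattice_quasi_skew :
  add_quasi_regular SR -> add_closed SR Reg -> b_lattice_of SR (skew_ring SR) Reg ->
  b_lattice_of SR (quasi_skew_ring SR) (Whole SR) /\ E_plus_commute SR.
Proof.
  intros Hq Hadd [rho [Hcongr [Hblat Hclass]]]. split.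
  - exists (same_regular_rep rho). split; [| split].
    + apply same_regular_rep_congruence; assumption.
    + apply same_regular_rep_b_lattice; assumption.
    + intros x _. apply same_regular_rep_class; assumption.
  - apply regular_b_lattice_E_plus_commute with rho; assumption.
Qed.
End Semiring.

Theorem theorem3p7 (S : semiring) :
  (quasi_completely_regular S /\ E_plus_commute S <->
   @b_lattice_of S (@quasi_skew_ring S) (Whole S) /\ E_plus_commute S) /\
  (@b_lattice_of S (@quasi_skew_ring S) (Whole S) /\ E_plus_commute S <->
   add_quasi_regular S /\ @add_closed S (@add_regular S) /\ @mul_closed S (@add_regular S) /\
   @b_lattice_of S (@skew_ring S) (@add_regular S)).
Proof.
  pose proof (@quasi_completely_regular_b_lattice_regular S) as i_iii.
  pose proof (@regular_b_lattice_quasi_skew S) as iii_ii.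
  pose proof (@b_lattice_quasi_skew_quasi_completely_regular S) as ii_i.
  split; split.
  - intros [Hqcr Hcomm]. destruct (i_iii Hqcr Hcomm) as [Hq [Hadd [_ Hblat]]].
    exact (iii_ii Hq Hadd Hblat).
  - intros [Hblat Hcomm]. exact (conj (ii_i Hblat) Hcomm).
  - intros [Hblat Hcomm]. exact (i_iii (ii_i Hblat) Hcomm).
  - intros [Hq [Hadd [_ Hblat]]]. exact (iii_ii Hq Hadd Hblat).
Qed.
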